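(* Let $n$ be a non-negative integer, let $x\neq 1$ be a complex number, and let $r$ be a complex number that is not a negative integer. Then $$\sum_{k = 1}^n \sum_{j = 0}^{k - 1} \frac{x^{n-j}}{k - j + r} = \frac{1}{1-x} \left(\sum_{k=1}^n \frac{x^k}{k+r} - x^{n+1}(H_{n+r} - H_r) \right).$$ In particular, $$\sum_{k = 1}^n \sum_{j = 0}^{k - 1} \frac{x^{n-j}}{k - j} = \frac{1}{1-x} \left( \sum_{k=1}^n \frac{x^k}{k} - x^{n+1} H_n \right)$$ and $$\sum_{k = 1}^n \sum_{j = 0}^{k - 1} \frac{x^{n-j}}{2k - 2j - 1} = \frac{1}{1-x} \left( \sum_{k=1}^n \frac{x^k}{2k-1} - x^{n+1} O_n \right).$$
   Context: For a complex number $z$ that is not a negative integer, $H_z=\sum_{m=1}^\infty\left(\frac1m-\frac1{m+z}\right)$ (so $H_0=0$ and $H_n=\sum_{m=1}^n\frac1m$ for non-negative integers $n$). $O_n=\sum_{m=1}^n\frac1{2m-1}$ is the odd harmonic number. Empty sums are zero. *)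

From Stdlib Require Import Reals.
From Coquelicot Require Import Coquelicot.
Open Scope C_scope.

(* Generalized harmonic number H_z = sum_{m>=1} (1/m - 1/(m+z)),
   defined as the limit of the partial sums (sum_n f N = f 0 + ... + f N). *)
Definition Hz (z : Complex.C) : Complex.C :=
  @lim C_CompleteNormedModule
    (filtermap (fun N : nat =>
       sum_n (fun m : nat => (/ RtoC (INR (S m)) - / (RtoC (INR (S m)) + z))%C) N)
       eventually).

Definition On (n : nat) : Complex.C :=
  sum_n_m (fun m : nat => / (2 * RtoC (INR m) - 1)) 1 n.

Definition is_neg_int (z : Complex.C) : Prop :=
  exists k : nat, z = - RtoC (INR (S k)).

From Stdlib Require Import Reals Lra Lia.
From Coquelicot Require Import Coquelicot.

(* With T_n := sum_{k=1}^n sum_{j<k} x^(n-j) c_(k-j), the new row k = n+1 of T_(n+1) is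
   sum_{i=1}^{n+1} x^i c_i read backwards, so T_(n+1) = x T_n + sum_{i=1}^{n+1} x^i c_i and by
   induction (1 - x) T_n = sum_{k=1}^n x^k c_k - x^(n+1) sum_{k=1}^n c_k.  The three identities
   are the cases c_i = 1/(i+r), 1/i and 1/(2i-1), where sum_{k=1}^n c_k is H_(n+r) - H_r, H_n
   and O_n.  For the harmonic numbers: the series defining H_z converges, its terms being
   O(|z|/m^2), and the difference of the series for H_(z+1) and H_z telescopes, so that
   H_(z+1) = H_z + 1/(z+1). *)

Local Open Scope R_scope.

Section Telescoping.

Context {K : AbsRing} {V : NormedModule K}.

Lemma sum_n_telescope (c : nat -> V) (n : nat) :
  sum_n (fun m => minus (c m) (c (S m))) n = minus (c 0%nat) (c (S n)).
Proof.
induction n as [|n IH].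
- now rewrite sum_O.
- rewrite sum_Sn, IH; unfold minus.
  now rewrite <- plus_assoc, (plus_assoc (opp _)), plus_opp_l, plus_zero_l.
Qed.

Lemma is_series_telescope (c : nat -> V) :
  filterlim c eventually (locally (zero : V)) ->
  is_series (fun m => minus (c m) (c (S m))) (c 0%nat).
Proof.
intros Hc; unfold is_series.
apply (filterlim_ext (fun n => minus (c 0%nat) (c (S n)))).
{ intros n; symmetry; apply sum_n_telescope. }
eapply (filterlim_comp_2 (fun _ => c 0%nat) (fun n => opp (c (S n))) plus).
- apply filterlim_const.
- apply (filterlim_comp _ _ _ (fun n => c (S n)) opp _ (locally (zero : V)));
    [|apply filterlim_opp].
  apply (filterlim_comp _ _ _ S c _ eventually); [|exact Hc].
  apply eventually_subseq; intros; lia.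
- (* [rewrite opp_zero] fails here: the goal's [zero] is found through a different
     canonical instance, hence the conversion-based [apply]. *)
  replace (c 0%nat) with (plus (c 0%nat) (opp (zero : V))) at 2
    by (etransitivity; [apply f_equal, (opp_zero (G := NormedModule.AbelianGroup K V))
                       | apply plus_zero_r]).
  apply filterlim_plus.
Qed.

End Telescoping.

Lemma is_series_lim {K : AbsRing} {V : CompleteNormedModule K} (a : nat -> V) (l : V) :
  is_series a l -> lim (filtermap (sum_n a) eventually) = l.
Proof.
intros Ha.
set (F := filtermap (sum_n a) eventually).
assert (PF : ProperFilter F) by apply filtermap_proper_filter, eventually_filter.
assert (HF : is_filter_lim F (lim F)).
{ intros P [eps HP]; apply (filter_imp _ _ HP).
  apply (complete_cauchy F PF).
  intros e; exists l; apply (proj1 (filterlim_locally _ _) Ha e). }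
exact (is_filter_lim_unique (K := K) (F := F) _ _ HF Ha).
Qed.

Lemma eventually_INR_gt (a : R) : eventually (fun n => a < INR n).
Proof. apply is_lim_seq_INR; now exists a. Qed.

Lemma is_lim_seq_inv_INR_S : is_lim_seq (fun m => / INR (S m)) 0.
Proof.
apply (is_lim_seq_inv (fun m => INR (S m)) p_infty); [|discriminate].
exact (proj1 (is_lim_seq_incr_1 INR p_infty) is_lim_seq_INR).
Qed.

Local Open Scope C_scope.

Lemma Cmod_RtoC_add_ge (t : R) (z : C) : (0 <= t)%R -> (t - Cmod z <= Cmod (RtoC t + z))%R.
Proof.
intros Ht.
assert (Htri := Cmod_triangle (RtoC t + z) (- z)).
replace (RtoC t + z + - z) with (RtoC t) in Htri by ring.
rewrite Cmod_opp, Cmod_R, Rabs_pos_eq in Htri by exact Ht; lra.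
Qed.

Lemma Cmod_inv_RtoC_add_le (t : R) (z : C) :
  (0 < t)%R -> (2 * Cmod z <= t)%R -> (Cmod (/ (RtoC t + z)) <= 2 / t)%R.
Proof.
intros Ht Htz.
assert (Hlow : (t / 2 <= Cmod (RtoC t + z))%R)
  by (assert (H := Cmod_RtoC_add_ge t z); lra).
rewrite Cmod_inv by (intros E; rewrite E, Cmod_0 in Hlow; lra).
replace (2 / t)%R with (/ (t / 2))%R by (field; lra).
apply Rinv_le_contravar; lra.
Qed.

Lemma inv_RtoC_INR_add_to_0 (z : C) :
  filterlim (fun m => / (RtoC (INR (S m)) + z)) eventually (locally (0 : C)).
Proof.
apply (filterlim_norm_zero (K := C_AbsRing) (V := C_NormedModule)).
apply (is_lim_seq_le_le_loc (fun _ => 0%R) _ (fun m => (2 * / INR (S m))%R) (Finite 0)).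
- destruct (eventually_INR_gt (2 * Cmod z)) as [N HN]; exists N; intros m Hm.
  split; [apply norm_ge_0|].
  apply Cmod_inv_RtoC_add_le; [apply lt_0_INR; lia|].
  assert (H := HN m Hm); rewrite S_INR; lra.
- apply is_lim_seq_const.
- replace (Finite 0) with (Rbar_mult 2 0) by (simpl; f_equal; ring).
  apply is_lim_seq_scal_l, is_lim_seq_inv_INR_S.
Qed.

Definition harmonic_term (z : C) (m : nat) : C :=
  / RtoC (INR (S m)) - / (RtoC (INR (S m)) + z).

Lemma harmonic_term_bound (z : C) (m : nat) :
  (2 * Cmod z <= INR (S m))%R ->
  (Cmod (harmonic_term z m) <= 4 * Cmod z * (/ INR (S m) - / INR (S (S m))))%R.
Proof.
unfold harmonic_term; rewrite (S_INR (S m)); set (t := INR (S m)); intros Htz.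
assert (Ht : (1 <= t)%R) by (unfold t; rewrite S_INR; generalize (pos_INR m); lra).
assert (Hinv := Cmod_inv_RtoC_add_le t z ltac:(lra) Htz).
assert (Htz0 : RtoC t + z <> 0)
  by (intros E; assert (H := Cmod_RtoC_add_ge t z); rewrite E, Cmod_0 in H; lra).
assert (Ht0 : RtoC t <> 0) by (apply Cmod_gt_0; rewrite Cmod_R; apply Rabs_pos_lt; lra).
replace (/ RtoC t - / (RtoC t + z)) with (z * / RtoC t * / (RtoC t + z)) by (field; tauto).
rewrite !Cmod_mult, Cmod_inv, Cmod_R, Rabs_pos_eq by (exact Ht0 || lra).
replace (4 * Cmod z * (/ t - / (t + 1)))%R with (Cmod z * / t * / ((t + 1) / 4))%R
  by (field; lra).
apply Rmult_le_compat_l.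
{ apply Rmult_le_pos; [apply Cmod_ge_0 | apply Rlt_le, Rinv_0_lt_compat; lra]. }
apply (Rle_trans _ _ _ Hinv).
replace (2 / t)%R with (/ (t / 2))%R by (field; lra).
apply Rinv_le_contravar; lra.
Qed.

Lemma ex_series_harmonic_term (z : C) : ex_series (harmonic_term z).
Proof.
set (d := fun m => (4 * Cmod z * (/ INR (S m) - / INR (S (S m))))%R).
destruct (eventually_INR_gt (2 * Cmod z)) as [N HN].
apply (ex_series_incr_n _ N).
apply (ex_series_le (V := C_CompleteNormedModule) _ (fun k => d (N + k)%nat)).
- intros k; apply harmonic_term_bound.
  assert (H := HN (N + k)%nat ltac:(lia)); rewrite S_INR; lra.
- apply (ex_series_incr_n d N).
  apply (ex_series_scal_l (K := R_AbsRing) (4 * Cmod z)%R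
           (fun m => / INR (S m) - / INR (S (S m)))%R).
  exists (/ INR 1)%R; apply (is_series_telescope (fun m => / INR (S m))%R).
  exact is_lim_seq_inv_INR_S.
Qed.

Lemma Hz_is_series (z : C) : is_series (harmonic_term z) (Hz z).
Proof.
destruct (ex_series_harmonic_term z) as [l Hl].
replace (Hz z) with l; [exact Hl|].
symmetry; exact (is_series_lim _ _ Hl).
Qed.

Lemma Hz_succ (z : C) : Hz (z + 1) = Hz z + / (1 + z).
Proof.
set (c := fun m => / (RtoC (INR (S m)) + z)).
assert (Hdiff := is_series_minus _ _ _ _ (Hz_is_series (z + 1)) (Hz_is_series z)).
assert (Htel : is_series (fun m => minus (c m) (c (S m))) (c 0%nat))
  by exact (is_series_telescope c (inv_RtoC_INR_add_to_0 z)).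
assert (Hterm : forall m,
  minus (harmonic_term (z + 1) m) (harmonic_term z m) = minus (c m) (c (S m))).
{ intros m; unfold harmonic_term, c.
  replace (RtoC (INR (S m)) + (z + 1)) with (RtoC (INR (S (S m))) + z)
    by (rewrite (S_INR (S m)), RtoC_plus; ring).
  unfold minus, plus, opp; simpl; ring. }
assert (E := filterlim_locally_unique _ _ _ (is_series_ext _ _ _ Hterm Hdiff) Htel).
unfold c in E; simpl in E.
rewrite <- E; unfold plus, opp; simpl; ring.
Qed.

Lemma Hz_add_nat (r : C) (n : nat) :
  Hz (RtoC (INR n) + r) - Hz r = sum_n_m (fun k => / (RtoC (INR k) + r)) 1 n.
Proof.
induction n as [|n IH].
- rewrite sum_n_m_zero by lia; simpl; rewrite Cplus_0_l; apply Cplus_opp_r.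
- rewrite sum_n_Sm, <- IH by lia.
  replace (RtoC (INR (S n)) + r) with (RtoC (INR n) + r + 1)
    by (rewrite S_INR, RtoC_plus; ring).
  rewrite Hz_succ; unfold plus; simpl.
  replace (1 + (RtoC (INR n) + r)) with (RtoC (INR n) + r + 1) by ring.
  ring.
Qed.

Lemma Hz_0 : Hz 0 = 0.
Proof.
assert (Hzero : forall m, minus (RtoC 0) (RtoC 0) = harmonic_term 0 m).
{ intros m; unfold harmonic_term; rewrite Cplus_0_r; unfold minus, plus, opp; simpl; ring. }
apply (filterlim_locally_unique _ _ _ (Hz_is_series 0)), (is_series_ext _ _ _ Hzero).
exact (is_series_telescope (V := C_NormedModule) (fun _ => RtoC 0) (filterlim_const _)).
Qed.

Lemma Hz_nat (n : nat) : Hz (RtoC (INR n)) = sum_n_m (fun k => / RtoC (INR k)) 1 n.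
Proof.
transitivity (Hz (RtoC (INR n) + 0) - Hz 0); [rewrite Cplus_0_r, Hz_0; ring|].
rewrite Hz_add_nat; apply sum_n_m_ext; intros k; now rewrite Cplus_0_r.
Qed.

Lemma sum_n_m_rev {G : AbelianMonoid} (f : nat -> G) (n : nat) :
  sum_n_m (fun j => f (S n - j)%nat) 0 n = sum_n_m f 1 (S n).
Proof.
induction n as [|n IH]; [now rewrite !sum_n_n|].
rewrite sum_Sn_m, <- sum_n_m_S, (sum_n_Sm f) by lia.
rewrite plus_comm; f_equal; exact IH.
Qed.

Definition tri_sum (x : C) (c : nat -> C) (n : nat) : C :=
  sum_n_m (fun k => sum_n_m (fun j => Cpow x (n - j) * c (k - j)%nat) 0 (k - 1)) 1 n.

Lemma tri_sum_succ (x : C) (c : nat -> C) (n : nat) :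
  tri_sum x c (S n) = x * tri_sum x c n + sum_n_m (fun i => Cpow x i * c i) 1 (S n).
Proof.
unfold tri_sum; rewrite sum_n_Sm by lia; apply (f_equal2 Cplus).
- rewrite <- (sum_n_m_mult_l (K := C_Ring)); apply sum_n_m_ext_loc; intros k Hk.
  rewrite <- (sum_n_m_mult_l (K := C_Ring)); apply sum_n_m_ext_loc; intros j Hj.
  replace (S n - j)%nat with (S (n - j)) by lia; simpl; unfold mult; simpl; ring.
- replace (S n - 1)%nat with n by lia.
  exact (sum_n_m_rev (fun i => Cpow x i * c i) n).
Qed.

Lemma tri_sum_mul_one_sub (x : C) (c : nat -> C) (n : nat) :
  (1 - x) * tri_sum x c n
  = sum_n_m (fun k => Cpow x k * c k) 1 n - Cpow x (S n) * sum_n_m c 1 n.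
Proof.
induction n as [|n IH].
- unfold tri_sum; rewrite !sum_n_m_zero by lia; unfold zero; simpl; ring.
- rewrite tri_sum_succ, !(sum_n_Sm _ 1 n) by lia; unfold plus; simpl.
  transitivity (x * ((1 - x) * tri_sum x c n)
                + (1 - x) * (sum_n_m (fun i => Cpow x i * c i) 1 n + x * Cpow x n * c (S n)));
    [ring|].
  rewrite IH; simpl; ring.
Qed.

Lemma tri_sum_closed (x : C) (c : nat -> C) (n : nat) : x <> 1 ->
  tri_sum x c n
  = / (1 - x) * (sum_n_m (fun k => Cpow x k * c k) 1 n - Cpow x (S n) * sum_n_m c 1 n).
Proof.
intros hx; rewrite <- tri_sum_mul_one_sub, Cmult_assoc, Cinv_l, Cmult_1_l; [reflexivity|].
now apply Cminus_eq_contra, not_eq_sym.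
Qed.

Lemma tri_sum_diff (x : C) (g : C -> C) (n : nat) :
  sum_n_m (fun k => sum_n_m (fun j =>
    Cpow x (n - j) * g (RtoC (INR k) - RtoC (INR j))) 0 (k - 1)) 1 n
  = tri_sum x (fun i => g (RtoC (INR i))) n.
Proof.
apply sum_n_m_ext_loc; intros k Hk; apply sum_n_m_ext_loc; intros j Hj.
now rewrite minus_INR, RtoC_minus by lia.
Qed.

Theorem proposition8 (n : nat) (x : Complex.C) (hx : x <> RtoC 1) :
  (forall r : Complex.C, ~ is_neg_int r ->
     sum_n_m (fun k : nat =>
       sum_n_m (fun j : nat =>
         Cpow x (n - j) / (RtoC (INR k) - RtoC (INR j) + r)) 0 (k - 1)) 1 n
     = / (1 - x) *
       (sum_n_m (fun k : nat => Cpow x k / (RtoC (INR k) + r)) 1 n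
        - Cpow x (S n) * (Hz (RtoC (INR n) + r) - Hz r)))
  /\
  sum_n_m (fun k : nat =>
    sum_n_m (fun j : nat =>
      Cpow x (n - j) / (RtoC (INR k) - RtoC (INR j))) 0 (k - 1)) 1 n
  = / (1 - x) *
    (sum_n_m (fun k : nat => Cpow x k / RtoC (INR k)) 1 n
     - Cpow x (S n) * Hz (RtoC (INR n)))
  /\
  sum_n_m (fun k : nat =>
    sum_n_m (fun j : nat =>
      Cpow x (n - j) / (2 * RtoC (INR k) - 2 * RtoC (INR j) - 1)) 0 (k - 1)) 1 n
  = / (1 - x) *
    (sum_n_m (fun k : nat => Cpow x k / (2 * RtoC (INR k) - 1)) 1 n
     - Cpow x (S n) * On n).
Proof.
split; [|split].
-
  intros r _.
  etransitivity; [apply (tri_sum_diff x (fun w => / (w + r)))|].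
  now rewrite tri_sum_closed, Hz_add_nat.
- etransitivity; [apply (tri_sum_diff x Cinv)|].
  now rewrite tri_sum_closed, Hz_nat.
- transitivity (tri_sum x (fun i => / (2 * RtoC (INR i) - 1)) n).
  + rewrite <- (tri_sum_diff x (fun w => / (2 * w - 1))).
    apply sum_n_m_ext; intros k; apply sum_n_m_ext; intros j.
    unfold Cdiv; do 2 f_equal; ring.
  + now rewrite tri_sum_closed.
Qed.
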